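(* Let $A$ be a non-empty set, $I$ a non-empty index set, $\{V_i\}_{i\in I}\subseteq\mathcal R(A)$, $E$ a fuzzy equivalence on $A$, and $(A/E,I,V_i^{A/E})$ the quotient fuzzy relational system of $(A,I,V_i)$ with respect to $E$. Let $E^\natural\in\mathcal R(A,A/E)$ be defined by $E^\natural(a_1,E_{a_2})=E(a_1,a_2)$. The following are equivalent: (i) $E$ is a solution to $WL^{1\text{-}4}(A,I,V_i)$; (ii) $E^\natural$ is a solution to $WL^{2\text{-}3}(A,A/E,I,V_i,V_i^{A/E})$; (iii) $E^\natural$ is a solution to $WL^{2\text{-}5}(A,A/E,I,V_i,V_i^{A/E})$.
   Context: $\mathcal L=(L,\wedge,\vee,\otimes,\to,0,1)$ is a complete residuated lattice. For non-empty sets $X,Y$, $\mathcal R(X,Y)$ is the set of fuzzy relations $X\times Y\to L$, $\mathcal R(X)=\mathcal R(X,X)$, ordered pointwise; $R^{-1}(y,x)=R(x,y)$; $(R\circ S)(x,t)=\bigvee_{y}R(x,y)\otimes S(y,t)$. A fuzzy equivalence $E$ on $A$ is reflexive ($E(a,a)=1$), symmetric and transitive ($E(a,b)\otimes E(b,c)\le E(a,c)$). $E_a(x)=E(a,x)$, $A/E=\{E_a:a\in A\}$, and $V_i^{A/E}(E_{a_1},E_{a_2})=(E\circ V_i\circ E)(a_1,a_2)$ (well defined). $WL^{1\text{-}4}(A,I,V_i)$ (unknown $U\in\mathcal R(A)$): $U\circ V_i\le V_i\circ U$ and $U^{-1}\circ V_i\le V_i\circ U^{-1}$ for all $i\in I$.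 For $\{W_i\}\subseteq\mathcal R(Q)$ and unknown $U\in\mathcal R(P,Q)$: $WL^{2\text{-}3}(P,Q,I,V_i,W_i)$: $U^{-1}\circ V_i\le W_i\circ U^{-1}$ and $U\circ W_i\le V_i\circ U$ for all $i\in I$; $WL^{2\text{-}5}(P,Q,I,V_i,W_i)$: $V_i\circ U=U\circ W_i$ for all $i\in I$. *)

From Stdlib Require Import ClassicalEpsilon.


Record CRL := {
  car :> Type;
  le : car -> car -> Prop;
  sup : (car -> Prop) -> car;
  inf : (car -> Prop) -> car;
  mul : car -> car -> car;
  res : car -> car -> car;
  zero : car;
  one : car;
  le_refl : forall x, le x x;
  le_trans : forall x y z, le x y -> le y z -> le x z;
  le_antisym : forall x y, le x y -> le y x -> x = y;
  sup_ub : forall (S : car -> Prop) x, S x -> le x (sup S);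
  sup_least : forall (S : car -> Prop) z, (forall x, S x -> le x z) -> le (sup S) z;
  inf_lb : forall (S : car -> Prop) x, S x -> le (inf S) x;
  inf_greatest : forall (S : car -> Prop) z, (forall x, S x -> le z x) -> le z (inf S);
  zero_le : forall x, le zero x;
  le_one : forall x, le x one;
  mulA : forall x y z, mul x (mul y z) = mul (mul x y) z;
  mulC : forall x y, mul x y = mul y x;
  mul1 : forall x, mul x one = x;
  adjoint : forall x y z, le (mul x y) z <-> le x (res y z)
}.

Arguments le {c} _ _.
Arguments sup {c} _.
Arguments inf {c} _.
Arguments mul {c} _ _.
Arguments res {c} _ _.

Set Implicit Arguments.
Section Fuzzy.
Variable L : CRL.

Definition join (x y : L) : L := sup (fun z => z = x \/ z = y).
Definition meet (x y : L) : L := inf (fun z => z = x \/ z = y).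

Definition frel (X Y : Type) := X -> Y -> L.

Definition rle (X Y : Type) (R S : frel X Y) : Prop :=
  forall x y, le (R x y) (S x y).

Definition rinv (X Y : Type) (R : frel X Y) : frel Y X := fun y x => R x y.

Definition rcomp (X Y Z : Type) (R : frel X Y) (S : frel Y Z) : frel X Z :=
  fun x t => sup (fun v => exists y, v = mul (R x y) (S y t)).

Definition fuzzy_equiv (A : Type) (E : frel A A) : Prop :=
  (forall a, E a a = one L) /\
  (forall a b, E a b = E b a) /\
  (forall a b c, le (mul (E a b) (E b c)) (E a c)).

Definition quot (A : Type) (E : frel A A) : Type :=
  { f : A -> L | exists a, f = E a }.

(** A chosen representative a of a class E_a (the constructions below
    do not depend on the choice when E is a fuzzy equivalence). *)
Definition rep (A : Type) (E : frel A A) (p : quot E) : A :=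
  proj1_sig (constructive_indefinite_description _ (proj2_sig p)).

Definition quot_rel (A : Type) (E : frel A A) (V : frel A A) : frel (quot E) (quot E) :=
  fun p q => rcomp (rcomp E V) E (rep p) (rep q).

Definition Enat (A : Type) (E : frel A A) : frel A (quot E) :=
  fun a1 p => E a1 (rep p).

Definition WL1_4 (A I : Type) (V : I -> frel A A) (U : frel A A) : Prop :=
  forall i, rle (rcomp U (V i)) (rcomp (V i) U) /\
            rle (rcomp (rinv U) (V i)) (rcomp (V i) (rinv U)).

Definition WL2_3 (P Q I : Type) (V : I -> frel P P) (W : I -> frel Q Q)
  (U : frel P Q) : Prop :=
  forall i, rle (rcomp (rinv U) (V i)) (rcomp (W i) (rinv U)) /\
            rle (rcomp U (W i)) (rcomp (V i) U).

Definition WL2_5 (P Q I : Type) (V : I -> frel P P) (W : I -> frel Q Q)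
  (U : frel P Q) : Prop :=
  forall i, rcomp (V i) U = rcomp U (W i).

End Fuzzy.

Arguments quot_rel {L A} E V _ _.
Arguments Enat {L A} E _ _.
Arguments WL1_4 {L A I} V U.
Arguments WL2_3 {L P Q I} V W U.
Arguments WL2_5 {L P Q I} V W U.
Arguments fuzzy_equiv {L A} E.

(* With E^nat(a, E_b) = E(a, b) one computes (V o E^nat)(a, E_b) = (V o E)(a, b) and
   (E^nat o V^{A/E})(a, E_b) = (E o V o E)(a, b).  Since E is reflexive, symmetric and
   idempotent (E o E = E), condition (i) reads E o V <= V o E, which is equivalent to
   E o V o E <= V o E, i.e. to the second inequality of (ii), and to equality in (iii)
   because V o E <= E o V o E always holds.  The first inequality of (ii) holds for
   every fuzzy equivalence. *)
From Stdlib Require Import FunctionalExtensionality ClassicalEpsilon.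

Set Implicit Arguments.

Section Composition.
Variable L : CRL.

Lemma mul_monol (x y z : L) : le x y -> le (mul x z) (mul y z).
Proof.
  intro Hxy. apply adjoint. apply le_trans with y; [exact Hxy|].
  apply adjoint. apply le_refl.
Qed.

Lemma mul_monor (x y z : L) : le x y -> le (mul z x) (mul z y).
Proof. intro Hxy. rewrite (mulC _ z x), (mulC _ z y). now apply mul_monol. Qed.

Lemma rle_refl (X Y : Type) (R : frel L X Y) : rle R R.
Proof. intros x y. apply le_refl. Qed.

Lemma rle_trans (X Y : Type) (R S T : frel L X Y) : rle R S -> rle S T -> rle R T.
Proof. intros HRS HST x y. eapply le_trans; eauto. Qed.

Lemma rle_antisym (X Y : Type) (R S : frel L X Y) : rle R S -> rle S R -> R = S.
Proof.
  intros HRS HSR. apply functional_extensionality; intro x.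
  apply functional_extensionality; intro y. now apply le_antisym.
Qed.

Lemma le_rcomp (X Y Z : Type) (R : frel L X Y) (S : frel L Y Z) x y t :
  le (mul (R x y) (S y t)) (rcomp R S x t).
Proof. apply sup_ub. now exists y. Qed.

Lemma rcomp_le (X Y Z : Type) (R : frel L X Y) (S : frel L Y Z) x t z :
  (forall y, le (mul (R x y) (S y t)) z) -> le (rcomp R S x t) z.
Proof. intro Hz. apply sup_least. intros v [y ->]. apply Hz. Qed.

Lemma rcomp_mono (X Y Z : Type) (R R' : frel L X Y) (S S' : frel L Y Z) :
  rle R R' -> rle S S' -> rle (rcomp R S) (rcomp R' S').
Proof.
  intros HR HS x t. apply rcomp_le. intro y.
  eapply le_trans; [apply mul_monol, HR|].
  eapply le_trans; [apply mul_monor, HS|]. apply le_rcomp.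
Qed.

Lemma rcompA (X Y Z W : Type) (R : frel L X Y) (S : frel L Y Z) (T : frel L Z W) :
  rcomp R (rcomp S T) = rcomp (rcomp R S) T.
Proof.
  apply rle_antisym; intros x t; apply rcomp_le; intro y.
  - rewrite mulC. apply adjoint. apply rcomp_le. intro w.
    apply (proj1 (adjoint _ (mul (S y w) (T w t)) (R x y) _)). rewrite mulC, mulA.
    eapply le_trans; [apply mul_monol, (le_rcomp R S x y w)|]. apply le_rcomp.
  - apply adjoint. apply rcomp_le. intro w.
    apply (proj1 (adjoint _ (mul (R x w) (S w y)) (T y t) _)). rewrite <- mulA.
    eapply le_trans; [apply mul_monor, (le_rcomp S T w y t)|]. apply le_rcomp.
Qed.

End Composition.

Section Equivalence.
Variables (L : CRL) (A : Type) (E : frel L A A).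
Hypothesis hE : fuzzy_equiv E.

Lemma rinv_equiv : rinv E = E.
Proof.
  apply functional_extensionality; intro a.
  apply functional_extensionality; intro b. apply hE.
Qed.

Lemma rcomp_equiv_r (X : Type) (R : frel L X A) : rle R (rcomp R E).
Proof.
  intros x t. rewrite <- (mul1 _ (R x t)), <- (proj1 hE t) at 1. apply le_rcomp.
Qed.

Lemma rcomp_equiv_l (X : Type) (R : frel L A X) : rle R (rcomp E R).
Proof.
  intros a t. rewrite <- (mul1 _ (R a t)), mulC, <- (proj1 hE a). apply le_rcomp.
Qed.

Lemma rcomp_equiv_idem : rcomp E E = E.
Proof.
  apply rle_antisym; [|apply rcomp_equiv_r].
  intros a c. apply rcomp_le. intro b. apply hE.
Qed.

Definition class (a : A) : quot E := exist _ (E a) (ex_intro _ a eq_refl).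

Lemma rep_class a : E (rep (class a)) = E a.
Proof.
  unfold rep. destruct (constructive_indefinite_description _ _) as [b Hb].
  simpl. now symmetry.
Qed.

Lemma Enat_class a b : Enat E a (class b) = E a b.
Proof.
  unfold Enat. rewrite (proj1 (proj2 hE) a), rep_class.
  apply (proj1 (proj2 hE)).
Qed.

Lemma rcomp_equiv_rep_r (X : Type) (R : frel L X A) x b :
  rcomp R E x (rep (class b)) = rcomp R E x b.
Proof.
  unfold rcomp. f_equal.
  apply functional_extensionality; intro v. f_equal.
  apply functional_extensionality; intro y.
  now rewrite (proj1 (proj2 hE) y), rep_class, (proj1 (proj2 hE) b).
Qed.

Lemma rcomp_equiv_rep_l (X : Type) (R : frel L A X) b x :
  rcomp E R (rep (class b)) x = rcomp E R b x.
Proof. unfold rcomp. now rewrite rep_class. Qed.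

Lemma rle_rcomp_equiv_rep (R S : frel L A A) :
  (forall a (q : quot E), le (rcomp R E a (rep q)) (rcomp S E a (rep q))) <->
  rle (rcomp R E) (rcomp S E).
Proof.
  split; [|intros HRS a q; apply HRS].
  intros HRS a b. rewrite <- (rcomp_equiv_rep_r R a b), <- (rcomp_equiv_rep_r S a b).
  apply HRS.
Qed.

Variable V : frel L A A.

Lemma rcomp_Enat a q : rcomp V (Enat E) a q = rcomp V E a (rep q).
Proof. reflexivity. Qed.

Lemma rcomp_Enat_quot_rel a q :
  rcomp (Enat E) (quot_rel E V) a q = rcomp (rcomp E V) E a (rep q).
Proof.
  apply le_antisym.
  - apply rcomp_le. intro p. unfold Enat, quot_rel.
    eapply le_trans; [apply (le_rcomp E (rcomp (rcomp E V) E))|].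
    rewrite rcompA, rcompA, rcomp_equiv_idem. apply le_refl.
  - eapply le_trans; [|apply (le_rcomp (Enat E) (quot_rel E V) a (class a) q)].
    rewrite Enat_class, (proj1 hE), mulC, mul1.
    unfold quot_rel. rewrite <- !rcompA, rcomp_equiv_rep_l. apply le_refl.
Qed.

Lemma rinv_Enat_sim :
  rle (rcomp (rinv (Enat E)) V) (rcomp (quot_rel E V) (rinv (Enat E))).
Proof.
  intros p a. apply rcomp_le. intro x.
  apply le_trans with (rcomp (rcomp E V) E (rep p) a).
  - unfold rinv, Enat. rewrite (proj1 (proj2 hE) x (rep p)).
    eapply le_trans; [apply (le_rcomp E V)|]. apply rcomp_equiv_r.
  - eapply le_trans; [|apply (le_rcomp (quot_rel E V) (rinv (Enat E)) p (class a) a)].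
    unfold rinv. rewrite Enat_class, (proj1 hE), mul1.
    unfold quot_rel. rewrite rcomp_equiv_rep_r. apply le_refl.
Qed.

Lemma rcomp_equiv_comm_iff :
  rle (rcomp E V) (rcomp V E) <-> rle (rcomp (rcomp E V) E) (rcomp V E).
Proof.
  split; intro HEV.
  - eapply rle_trans; [apply rcomp_mono; [exact HEV|apply rle_refl]|].
    rewrite <- rcompA, rcomp_equiv_idem. apply rle_refl.
  - eapply rle_trans; [apply rcomp_equiv_r|exact HEV].
Qed.

Lemma Enat_sim_iff :
  rle (rcomp (Enat E) (quot_rel E V)) (rcomp V (Enat E)) <-> rle (rcomp E V) (rcomp V E).
Proof.
  rewrite rcomp_equiv_comm_iff, <- rle_rcomp_equiv_rep.
  split; intros HEV a q; specialize (HEV a q);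
    rewrite ?rcomp_Enat_quot_rel, ?rcomp_Enat in *; exact HEV.
Qed.

Lemma Enat_comm_iff :
  rcomp V (Enat E) = rcomp (Enat E) (quot_rel E V) <->
  rle (rcomp (Enat E) (quot_rel E V)) (rcomp V (Enat E)).
Proof.
  split; [intros ->; apply rle_refl|].
  intro HEV. apply rle_antisym; [|exact HEV].
  intros a q. rewrite rcomp_Enat_quot_rel, rcomp_Enat, <- rcompA.
  apply rcomp_equiv_l.
Qed.

End Equivalence.

Theorem theorem6p2 (L : CRL) (A I : Type) (hA : inhabited A) (hI : inhabited I)
  (V : I -> frel L A A) (E : frel L A A) (hE : fuzzy_equiv E) :
  (WL1_4 V E <-> WL2_3 V (fun i => quot_rel E (V i)) (Enat E)) /\
  (WL2_3 V (fun i => quot_rel E (V i)) (Enat E) <->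
   WL2_5 V (fun i => quot_rel E (V i)) (Enat E)).
Proof.
  unfold WL1_4, WL2_3, WL2_5. rewrite (rinv_equiv hE).
  split; split; intros H i.
  - split; [apply (rinv_Enat_sim hE)|]. apply (Enat_sim_iff hE), (H i).
  - assert (HEV : rle (rcomp E (V i)) (rcomp (V i) E))
      by apply (Enat_sim_iff hE), (H i).
    now split.
  - apply (Enat_comm_iff hE), (H i).
  - split; [apply (rinv_Enat_sim hE)|]. apply (Enat_comm_iff hE), (H i).
Qed.
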